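(* Let $\mathcal{C}_0$ be an $(n,k)$ linear code over $\mathrm{GF}(q^m)$ with generator matrix $\mathbf{G}_0$ and parity-check matrix $\mathbf{H}_0$, let $s\ge1$ and let $\mathbf{B}$ be an $s\times n$ matrix over $\mathrm{GF}(q)$. Then the $s$-th order $\mathbf{B}$-elementary extension $\mathcal{C}_s$ of $\mathcal{C}_0$ is an $(n+s,k+s)$ linear code over $\mathrm{GF}(q^m)$ with generator matrix $\mathbf{G}_s=\begin{pmatrix}\mathbf{G}_0&\mathbf{0}\\ \mathbf{B}&\mathbf{I}_s\end{pmatrix}$ and parity-check matrix $\mathbf{H}_s=\begin{pmatrix}\mathbf{H}_0&-\mathbf{H}_0\mathbf{B}^T\end{pmatrix}$.
   Context: An $(n,k)$ linear code over $\mathrm{GF}(q^m)$ is a $k$-dimensional subspace of $\mathrm{GF}(q^m)^n$; a generator matrix is a $k\times n$ matrix whose rows form a basis, and a parity-check matrix is an $(n-k)\times n$ matrix $\mathbf{H}$ of full rank with $\mathcal{C}=\{\mathbf{c}:\mathbf{H}\mathbf{c}^T=\mathbf{0}\}$. The $s$-th order $\mathbf{B}$-elementary extension of $\mathcal{C}_0$ is $\mathcal{C}_s=\{(c_0,\dots,c_{n+s-1})\in\mathrm{GF}(q^m)^{n+s}:(c_0,\dots,c_{n-1})-(c_n,\dots,c_{n+s-1})\mathbf{B}\in\mathcal{C}_0\}$. *)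

From HB Require Import structures.
From mathcomp Require Import all_boot all_order all_algebra.
Set Implicit Arguments. Unset Strict Implicit. Unset Printing Implicit Defensive.
Import GRing.Theory.
Local Open Scope ring_scope.

Definition is_linear_code (F : finFieldType) (n k : nat) (C : {set 'rV[F]_n}) : Prop :=
  exists U : 'M[F]_n, \rank U = k /\ forall c : 'rV[F]_n, c \in C <-> (c <= U)%MS.

Definition is_generator_matrix (F : finFieldType) (k n : nat) (C : {set 'rV[F]_n})
  (G : 'M[F]_(k, n)) : Prop :=
  row_free G /\ forall c : 'rV[F]_n, c \in C <-> (c <= G)%MS.

Definition is_parity_check_matrix (F : finFieldType) (r n : nat) (C : {set 'rV[F]_n})
  (H : 'M[F]_(r, n)) : Prop :=
  row_free H /\ forall c : 'rV[F]_n, c \in C <-> H *m c^T = 0.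

Definition in_GFq (F : finFieldType) (q : nat) (x : F) : bool := x ^+ q == x.

Definition elem_ext (F : finFieldType) (n s : nat) (C0 : {set 'rV[F]_n})
  (B : 'M[F]_(s, n)) : {set 'rV[F]_(n + s)} :=
  [set c : 'rV[F]_(n + s) | lsubmx c - rsubmx c *m B \in C0].
Arguments is_linear_code {F} n k C.

(* With the coordinates split as c = (x, y), the map (x, y) |-> (x - yB, y) is
   a linear automorphism of F^(n+s) sending C_s onto C_0 x F^s. The rows of
   [G_0 0; B I] are mapped to the rows of [G_0 0; 0 I], a basis of C_0 x F^s,
   and the check [H_0, -H_0 B^T] applied to c equals H_0 applied to x - yB.
   Nothing uses that B has entries in GF(q): the statement holds for any B. *)
From HB Require Import structures.
From mathcomp Require Import all_boot all_order all_algebra.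
Set Implicit Arguments. Unset Strict Implicit. Unset Printing Implicit Defensive.
Import GRing.Theory.
Local Open Scope ring_scope.

Section ElementaryExtensionMatrices.

Variables (F : fieldType) (n s : nat) (B : 'M[F]_(s, n)).

Definition ext_shift (c : 'rV[F]_(n + s)) : 'rV[F]_n := lsubmx c - rsubmx c *m B.

Lemma ext_shift_row_mx (x : 'rV[F]_n) (y : 'rV[F]_s) :
  ext_shift (row_mx x y) = x - y *m B.
Proof. by rewrite /ext_shift row_mxKl row_mxKr. Qed.

Lemma mul_ext_genmx k (G0 : 'M[F]_(k, n)) (u : 'rV[F]_k) (y : 'rV[F]_s) :
  row_mx u y *m block_mx G0 0 B 1%:M = row_mx (u *m G0 + y *m B) y.
Proof. by rewrite mul_row_block mulmx0 mulmx1 add0r. Qed.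

Lemma submx_ext_genmx k (G0 : 'M[F]_(k, n)) (c : 'rV[F]_(n + s)) :
  (c <= block_mx G0 0 B 1%:M)%MS = (ext_shift c <= G0)%MS.
Proof.
apply/submxP/submxP => [[D ->] | [u hu]].
  by exists (lsubmx D); rewrite -{1}(hsubmxK D) mul_ext_genmx ext_shift_row_mx addrK.
exists (row_mx u (rsubmx c)).
by rewrite mul_ext_genmx -hu /ext_shift subrK hsubmxK.
Qed.

Lemma row_free_ext_genmx k (G0 : 'M[F]_(k, n)) :
  row_free G0 -> row_free (block_mx G0 0 B 1%:M).
Proof.
move=> freeG0; apply: inj_row_free => v.
rewrite -(hsubmxK v) mul_ext_genmx => /eqP; rewrite row_mx_eq0.
case/andP=> /eqP uG0_yB /eqP y0; rewrite y0 mul0mx addr0 in uG0_yB.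
have u0 : lsubmx v = 0 by apply: (row_free_inj freeG0); rewrite uG0_yB mul0mx.
by rewrite u0 y0 row_mx0.
Qed.

Lemma mul_ext_checkmx r (H0 : 'M[F]_(r, n)) (c : 'rV[F]_(n + s)) :
  row_mx H0 (- (H0 *m B^T)) *m c^T = H0 *m (ext_shift c)^T.
Proof.
rewrite -{1}(hsubmxK c) tr_row_mx mul_row_col /ext_shift.
by rewrite linearB /= trmx_mul mulmxBr mulNmx mulmxA.
Qed.

End ElementaryExtensionMatrices.

Lemma row_free_row_mx (F : fieldType) r n p (A : 'M[F]_(r, n)) (X : 'M[F]_(r, p)) :
  row_free A -> row_free (row_mx A X).
Proof.
move=> freeA; apply: inj_row_free => v; rewrite mul_mx_row.
move=> /eqP; rewrite row_mx_eq0 => /andP [/eqP vA0 _].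
by apply: (row_free_inj freeA); rewrite vA0 mul0mx.
Qed.

Section ElementaryExtensionCode.

Variables (F : finFieldType) (n s : nat) (C0 : {set 'rV[F]_n}) (B : 'M[F]_(s, n)).

Lemma generator_matrix_linear_code k (C : {set 'rV[F]_n}) (G : 'M[F]_(k, n)) :
  is_generator_matrix C G -> is_linear_code n k C.
Proof.
case=> freeG memG; exists <<G>>%MS; split; first by rewrite mxrank_gen; apply/eqP.
by move=> c; rewrite genmxE.
Qed.

Lemma elem_ext_generator_matrix k (G0 : 'M[F]_(k, n)) :
  is_generator_matrix C0 G0 ->
  is_generator_matrix (elem_ext C0 B) (block_mx G0 0 B 1%:M).
Proof.
case=> freeG0 memG0; split; first exact: row_free_ext_genmx.
by move=> c; rewrite inE submx_ext_genmx; exact: memG0.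
Qed.

Lemma elem_ext_parity_check_matrix r (H0 : 'M[F]_(r, n)) :
  is_parity_check_matrix C0 H0 ->
  is_parity_check_matrix (elem_ext C0 B) (row_mx H0 (- (H0 *m B^T))).
Proof.
case=> freeH0 memH0; split; first exact: row_free_row_mx.
by move=> c; rewrite inE mul_ext_checkmx; exact: memH0.
Qed.

End ElementaryExtensionCode.

Theorem lemma6 (F : finFieldType) (q m : nat) (hm : (0 < m)%N)
  (hF : #|F| = (q ^ m)%N) (n k s : nat) (hs : (1 <= s)%N)
  (C0 : {set 'rV[F]_n}) (G0 : 'M[F]_(k, n)) (H0 : 'M[F]_(n - k, n))
  (B : 'M[F]_(s, n)) :
  is_linear_code n k C0 ->
  is_generator_matrix C0 G0 ->
  is_parity_check_matrix C0 H0 ->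
  (forall i j, in_GFq q (B i j)) ->
  let Cs := elem_ext C0 B in
  [/\ is_linear_code (n + s) (k + s) Cs,
      is_generator_matrix Cs (block_mx G0 0 B 1%:M : 'M[F]_(k + s, n + s))
    & is_parity_check_matrix Cs (row_mx H0 (- (H0 *m B^T)) : 'M[F]_(n - k, n + s))].
Proof.
move=> _ genG0 checkH0 _ Cs.
have genGs := elem_ext_generator_matrix B genG0.
split; [exact: generator_matrix_linear_code genGs | exact: genGs |].
exact: elem_ext_parity_check_matrix.
Qed.
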